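(* If a domino tiling system $\mathcal{D}$ is solvable, then there exists a $\mathcal{D}$-snake.
   Context: A domino tiling system is $\mathcal{D}=(\mathrm{Col},\mathrm{T},\mathrm{white})$ with $\mathrm{Col}$ a finite set of colours, $\mathrm{T}\subseteq\mathrm{Col}^4$ a set of tiles $(c_l,c_d,c_r,c_u)$ and $\mathrm{white}\in\mathrm{Col}$; throughout, $\mathrm{T}$ contains no tile with more than two white sides. A tile is left-/down-/right-/up-border if $c_l$/$c_d$/$c_r$/$c_u$ equals white. Tiles $t=(c_l,c_d,c_r,c_u)$, $t'=(c'_l,c'_d,c'_r,c'_u)$ are H-compatible if $c_r=c'_l$ and V-compatible if $c_u=c'_d$. $\mathcal{D}$ covers $\mathbb{Z}_n\times\mathbb{Z}_m$ ($n,m$ positive) if there is $\xi:\mathbb{Z}_n\times\mathbb{Z}_m\to\mathrm{T}$ such that for all $(x,y)$ with $\xi(x,y)=(c_l,c_d,c_r,c_u)$: $x=0$ iff $c_l$ is white, $x=n-1$ iff $c_r$ is white, $y=0$ iff $c_d$ is white, $y=m-1$ iff $c_u$ is white; $\xi(x,y),\xi(x+1,y)$ are H-compatible whenever $x+1<n$; $\xi(x,y),\xi(x,y+1)$ are V-compatible whenever $y+1<m$. $\mathcal{D}$ is solvable if it covers some $\mathbb{Z}_n\times\mathbb{Z}_m$. Use a role name $r$, individual names $\mathsf{ld},\mathsf{rd},\mathsf{lu},\mathsf{ru}$ (the named ones) and concept names $C_t$ ($t\in\mathrm{T}$); an element carries $t$ if it lies in $C_t^{\mathcal{I}}$. An interpretation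 $\mathcal{I}$ is a $\mathcal{D}$-snake if: (SPath) there is an $r^+$-path starting at $\mathsf{ld}^{\mathcal{I}}$, later passing $\mathsf{rd}^{\mathcal{I}}$, later $\mathsf{lu}^{\mathcal{I}}$ and ending at $\mathsf{ru}^{\mathcal{I}}$ (at positions $1<i<j<$ last); (SNoLoop) no named element $r^+$-reaches itself; (SUniqTil) every element $r^*$-reachable from $\mathsf{ld}^{\mathcal{I}}$ carries exactly one tile; (SSpecTil) the named elements are exactly the elements $r^*$-reachable from $\mathsf{ld}^{\mathcal{I}}$ carrying a tile with two white sides, and $\mathsf{ld}^{\mathcal{I}}$ carries a left- and down-border tile, $\mathsf{rd}^{\mathcal{I}}$ a right- and down-border tile, $\mathsf{lu}^{\mathcal{I}}$ a left- and up-border tile, $\mathsf{ru}^{\mathcal{I}}$ a right- and up-border tile; (SHori) for every element $d\neq\mathsf{ru}^{\mathcal{I}}$ that is $r^*$-reachable from $\mathsf{ld}^{\mathcal{I}}$ and carries $t=(c_l,c_d,c_r,c_u)$ there is a tile $t'=(c'_l,c'_d,c'_r,c'_u)$ carried by all $r$-successors of $d$ such that (i) $t,t'$ are H-compatible, (ii) if $c_d$ is white then ($c_r$ is not white iff $c'_d$ is white), (iii) if $c_u$ is white then $c'_u$ is white; (SLen) there is a unique positive integer $N$ such that all $r^+$-paths from $\mathsf{ld}^{\mathcal{I}}$ to $\mathsf{rd}^{\mathcal{I}}$ have length $N-1$, and $\mathsf{rd}^{\mathcal{I}}$ is the only element $r^{N-1}$-reachable from $\mathsf{ld}^{\mathcal{I}}$;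 (SVerti) for every element $d$ $r^*$-reachable from $\mathsf{ld}^{\mathcal{I}}$ carrying a tile $t$ that is not up-border, there is a tile $t'$ carried by all elements $r^N$-reachable from $d$ (with $N$ from (SLen)) such that $t,t'$ are V-compatible and $t$ is left-border (resp. right-border) iff $t'$ is. Path length is the number of edges. *)

From mathcomp Require Import all_boot.
Set Implicit Arguments. Unset Strict Implicit. Unset Printing Implicit Defensive.

Section Domino.
Variable Col : finType.

Record tile := Tile { cl : Col; cd : Col; cr : Col; cu : Col }.

Variable white : Col.

Definition left_border  (t : tile) : Prop := cl t = white.
Definition down_border  (t : tile) : Prop := cd t = white.
Definition right_border (t : tile) : Prop := cr t = white.
Definition up_border    (t : tile) : Prop := cu t = white.

Definition nwhite (t : tile) : nat :=
  (cl t == white) + (cd t == white) + (cr t == white) + (cu t == white).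

Definition H_compat (t t' : tile) : Prop := cr t = cl t'.
Definition V_compat (t t' : tile) : Prop := cu t = cd t'.

Variable T : pred tile.

(* D covers Z_n x Z_m ; xi is only relevant on the grid x < n, y < m *)
Definition covers (n m : nat) : Prop :=
  0 < n /\ 0 < m /\
  exists xi : nat -> nat -> tile,
    (forall x y, x < n -> y < m ->
       [/\ T (xi x y),
           (x = 0 <-> cl (xi x y) = white),
           (x = n.-1 <-> cr (xi x y) = white),
           (y = 0 <-> cd (xi x y) = white) &
           (y = m.-1 <-> cu (xi x y) = white)]) /\
    (forall x y, x.+1 < n -> y < m -> H_compat (xi x y) (xi x.+1 y)) /\
    (forall x y, x < n -> y.+1 < m -> V_compat (xi x y) (xi x y.+1)).

Definition solvable : Prop := exists n m, covers n m.

(* Interpretations over the signature: role r, individuals ld rd lu ru,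
   concept names C_t (for t in T). *)
Record interp := Interp {
  dom : Type;
  role : dom -> dom -> Prop;
  ld : dom; rd : dom; lu : dom; ru : dom;
  conc : tile -> dom -> Prop }.
Arguments role : clear implicits.
Arguments conc : clear implicits.

Section Snake.
Variable J : interp.

Fixpoint rpow (k : nat) (d e : dom J) : Prop :=
  match k with
  | 0 => d = e
  | k'.+1 => exists d', role J d d' /\ rpow k' d' e
  end.

Definition rplus (d e : dom J) : Prop := exists k, 0 < k /\ rpow k d e.
Definition rstar (d e : dom J) : Prop := exists k, rpow k d e.

Definition carries (d : dom J) (t : tile) : Prop := T t /\ conc J t d.

Definition named (d : dom J) : Prop :=
  d = ld J \/ d = rd J \/ d = lu J \/ d = ru J.

Definition SPath : Prop :=
  exists (L : nat) (p : nat -> dom J),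
    p 0 = ld J /\ p L = ru J /\
    (forall k, k < L -> role J (p k) (p k.+1)) /\
    exists i j, [/\ 0 < i, i < j, j < L, p i = rd J & p j = lu J].

Definition SNoLoop : Prop := forall d, named d -> ~ rplus d d.

Definition SUniqTil : Prop :=
  forall d, rstar (ld J) d -> exists! t, carries d t.

Definition SSpecTil : Prop :=
  (forall d, named d <->
     (rstar (ld J) d /\ exists t, carries d t /\ nwhite t = 2)) /\
  (exists t, carries (ld J) t /\ left_border t /\ down_border t) /\
  (exists t, carries (rd J) t /\ right_border t /\ down_border t) /\
  (exists t, carries (lu J) t /\ left_border t /\ up_border t) /\
  (exists t, carries (ru J) t /\ right_border t /\ up_border t).

Definition SHori : Prop :=
  forall d t, d <> ru J -> rstar (ld J) d -> carries d t ->
    exists t', T t' /\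
      (forall e, role J d e -> carries e t') /\
      H_compat t t' /\
      (down_border t -> (~ right_border t <-> down_border t')) /\
      (up_border t -> up_border t').

Definition SLen_prop (N : nat) : Prop :=
  0 < N /\
  (forall k, 0 < k -> rpow k (ld J) (rd J) -> k = N.-1) /\
  (forall e, rpow N.-1 (ld J) e <-> e = rd J).

Definition SVerti (N : nat) : Prop :=
  forall d t, rstar (ld J) d -> carries d t -> ~ up_border t ->
    exists t', T t' /\
      (forall e, rpow N d e -> carries e t') /\
      V_compat t t' /\
      (left_border t <-> left_border t') /\
      (right_border t <-> right_border t').

Definition is_snake : Prop :=
  SPath /\ SNoLoop /\ SUniqTil /\ SSpecTil /\ SHori /\
  exists N, unique SLen_prop N /\ SVerti N.

End Snake.
End Domino.

From mathcomp Require Import all_boot zify.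
Set Implicit Arguments. Unset Strict Implicit.

(* Read a tiling xi of Z_n x Z_m row by row: the snake is the chain
   0 -> 1 -> ... -> nm-1 whose element y*n + x carries xi x y.  An r-step is a
   horizontal step, except at the right border where the chain wraps to the
   start of the next row (this is what SHori (ii) records on the bottom row),
   and the vertical neighbour of a cell lies exactly N = n steps later.  The
   bound of two white sides forces n, m >= 2, so the four corners are distinct
   and are exactly the cells whose tile has two white sides. *)

Section Chain.
Variables (Col : finType) (L : nat) (rd lu ru : nat) (conc : tile Col -> nat -> Prop).

Definition chain_interp : interp Col :=
  @Interp Col nat (fun a b => b = a.+1 /\ b < L) 0 rd lu ru conc.

Lemma rpow_chain k a e :
  @rpow _ chain_interp k a e <-> e = a + k /\ (k = 0 \/ a + k < L).
Proof.
elim: k a e => [|k IHk] a e /=.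
  by rewrite addn0; split=> [->|[-> _]]; [split; [|left] |].
split=> [[_ [[-> lt_a1] /IHk [-> lt_k]]]|[-> lt_ak]]; first by split; lia.
by exists a.+1; split; [split; lia | apply/IHk; lia].
Qed.

Lemma rstar_chain d : 0 < L -> @rstar _ chain_interp 0 d <-> d < L.
Proof.
move=> L_gt0; split=> [[k /rpow_chain [-> [->|]]] //|lt_dL].
by exists d; apply/rpow_chain; lia.
Qed.

Lemma chain_acyclic d : ~ @rplus _ chain_interp d d.
Proof. by case=> k [k_gt0 /rpow_chain [+ _]]; lia. Qed.

End Chain.

Section Grid.
Variables (Col : finType) (T : pred (tile Col)) (white : Col) (n m : nat)
  (xi : nat -> nat -> tile Col).
Hypothesis two_white : forall t, T t -> nwhite white t <= 2.
Hypotheses (n_gt0 : 0 < n) (m_gt0 : 0 < m).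
Hypothesis xi_border : forall x y, x < n -> y < m ->
  [/\ T (xi x y),
      (x = 0 <-> cl (xi x y) = white),
      (x = n.-1 <-> cr (xi x y) = white),
      (y = 0 <-> cd (xi x y) = white) &
      (y = m.-1 <-> cu (xi x y) = white)].
Hypothesis xi_H : forall x y, x.+1 < n -> y < m -> H_compat (xi x y) (xi x.+1 y).
Hypothesis xi_V : forall x y, x < n -> y.+1 < m -> V_compat (xi x y) (xi x y.+1).

Lemma nwhite_xi x y : x < n -> y < m ->
  nwhite white (xi x y) = (x == 0) + (y == 0) + (x == n.-1) + (y == m.-1).
Proof.
move=> lt_xn lt_ym; case: (xi_border lt_xn lt_ym) => _ Bl Br Bd Bu.
have borderE (c : Col) (i k : nat) : (i = k <-> c = white) -> (c == white) = (i == k).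
  by move=> Bc; apply/eqP/eqP => /Bc.
by rewrite /nwhite (borderE _ _ _ Bl) (borderE _ _ _ Br) (borderE _ _ _ Bd) (borderE _ _ _ Bu).
Qed.

Lemma grid_gt1 : 1 < n /\ 1 < m.
Proof.
(* xi 0 0 is already left and down border, so it cannot also be right or up border. *)
case: (xi_border n_gt0 m_gt0) => T00 _ _ _ _.
have := two_white T00; rewrite nwhite_xi //=.
by case: n n_gt0 m m_gt0 => [|[|n']] // _ [|[|m']].
Qed.

Definition cell x y := y * n + x.

Definition tile_at k := xi (k %% n) (k %/ n).

Lemma tile_at_cell x y : x < n -> tile_at (cell x y) = xi x y.
Proof.
by move=> lt_xn; rewrite /tile_at /cell modnMDl modn_small // divnMDl // divn_small // addn0.
Qed.

Lemma cellP d : d < n * m -> exists x y, [/\ x < n, y < m & d = cell x y].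
Proof.
move=> lt_d; exists (d %% n), (d %/ n); split; last exact: divn_eq.
  by rewrite ltn_pmod.
by rewrite ltn_divLR // mulnC.
Qed.

Lemma cell_lt x y : x < n -> y < m -> cell x y < n * m.
Proof. by rewrite /cell; nia. Qed.

Lemma cell_last : cell n.-1 m.-1 = (n * m).-1.
Proof. by rewrite /cell; nia. Qed.

Definition corner x y := ((x == 0) || (x == n.-1)) && ((y == 0) || (y == m.-1)).

Lemma nwhite_xi_eq2 x y : x < n -> y < m -> (nwhite white (xi x y) == 2) = corner x y.
Proof.
move=> lt_xn lt_ym; have [n_gt1 m_gt1] := grid_gt1; rewrite nwhite_xi // /corner.
by case: (x =P 0) => [->|_]; case: (y =P 0) => [->|_]; case: eqP; case: eqP; lia.
Qed.

Definition snake : interp Col :=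
  chain_interp (n * m) (cell n.-1 0) (cell 0 m.-1) (cell n.-1 m.-1)
    (fun t k => t = tile_at k).

Lemma rstar_snake d : rstar (J := snake) 0 d <-> d < n * m.
Proof. by apply: rstar_chain; rewrite muln_gt0 n_gt0. Qed.

Lemma T_tile_at d : d < n * m -> T (tile_at d).
Proof.
case/cellP=> x [y [lt_xn lt_ym ->]].
by rewrite tile_at_cell //; case: (xi_border lt_xn lt_ym).
Qed.

Lemma carries_cell x y : x < n -> y < m -> carries T (J := snake) (cell x y) (xi x y).
Proof.
move=> lt_xn lt_ym; rewrite /carries /= tile_at_cell //.
by case: (xi_border lt_xn lt_ym).
Qed.

Lemma named_snakeE d :
  named (J := snake) d <-> exists x y, [/\ x < n, y < m, d = cell x y & corner x y].
Proof.
have [n_gt1 m_gt1] := grid_gt1.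
have lt_n1 : n.-1 < n by lia.
have lt_m1 : m.-1 < m by lia.
rewrite /named /= /corner; split.
  case=> [->|[->|[->|->]]].
  - by exists 0, 0; split; rewrite /cell ?mul0n ?addn0 ?eqxx ?orbT.
  - by exists n.-1, 0; split; rewrite /cell ?mul0n ?addn0 ?eqxx ?orbT.
  - by exists 0, m.-1; split; rewrite /cell ?mul0n ?addn0 ?eqxx ?orbT.
  - by exists n.-1, m.-1; split; rewrite /cell ?mul0n ?addn0 ?eqxx ?orbT.
case=> x [y [_ _ -> /andP[/orP[]/eqP-> /orP[]/eqP->]]]; tauto.
Qed.

Lemma SPath_snake : SPath snake.
Proof.
have [n_gt1 m_gt1] := grid_gt1.
exists (n * m).-1, id; rewrite -cell_last; split=> //; split=> //; split.
  by move=> k lt_k; split; rewrite // /cell in lt_k *; nia.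
by exists n.-1, (cell 0 m.-1); split; rewrite // /cell; nia.
Qed.

Lemma SNoLoop_snake : SNoLoop snake.
Proof. by move=> d _; apply: chain_acyclic. Qed.

Lemma SUniqTil_snake : SUniqTil T snake.
Proof.
move=> d /rstar_snake lt_d; exists (tile_at d).
by split=> [|t [_ ->]] //; split; [exact: T_tile_at|].
Qed.

Lemma SSpecTil_snake : SSpecTil white T snake.
Proof.
have [n_gt1 m_gt1] := grid_gt1.
have lt_n1 : n.-1 < n by lia.
have lt_m1 : m.-1 < m by lia.
split.
  move=> d; rewrite named_snakeE rstar_snake; split.
    case=> x [y [lt_xn lt_ym -> corner_xy]]; split; first exact: cell_lt.
    by exists (xi x y); split; [exact: carries_cell | apply/eqP; rewrite nwhite_xi_eq2].
  case=> /cellP[x [y [lt_xn lt_ym ->]]] [t [[_ /= ->] /eqP]].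
  by rewrite tile_at_cell // nwhite_xi_eq2 // => corner_xy; exists x, y.
split; [|split; [|split]].
- case: (xi_border n_gt0 m_gt0) => _ Bl _ Bd _.
  by exists (xi 0 0); split; [exact: carries_cell | split; [exact/Bl | exact/Bd]].
- case: (xi_border lt_n1 m_gt0) => _ _ Br Bd _.
  by exists (xi n.-1 0); split; [exact: carries_cell | split; [exact/Br | exact/Bd]].
- case: (xi_border n_gt0 lt_m1) => _ Bl _ _ Bu.
  by exists (xi 0 m.-1); split; [exact: carries_cell | split; [exact/Bl | exact/Bu]].
- case: (xi_border lt_n1 lt_m1) => _ _ Br _ Bu.
  by exists (xi n.-1 m.-1); split; [exact: carries_cell | split; [exact/Br | exact/Bu]].
Qed.

Lemma SHori_snake : SHori white T snake.
Proof.
have [n_gt1 m_gt1] := grid_gt1.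
move=> d t /= d_ne_ru /rstar_snake lt_d [_ ->].
have lt_d1 : d.+1 < n * m by move: d_ne_ru; rewrite cell_last; lia.
exists (tile_at d.+1); split; first exact: T_tile_at.
split; first by move=> e [-> _]; split; first exact: T_tile_at.
case: (cellP lt_d) d_ne_ru => x [y [lt_xn lt_ym ->]] xy_ne_ru.
rewrite tile_at_cell // /down_border /right_border /up_border.
case: (xi_border lt_xn lt_ym) => _ _ Br Bd Bu; rewrite -Br -Bd -Bu.
have [lt_x1n | x_last] : x.+1 < n \/ x = n.-1 by lia.
- rewrite -addnS tile_at_cell //.
  case: (xi_border lt_x1n lt_ym) => _ _ _ Bd' Bu'; rewrite -Bd' -Bu'.
  by split; [exact: xi_H | lia].
- have lt_y1m : y.+1 < m.
    by move: xy_ne_ru; rewrite x_last /cell; nia.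
  have -> : (cell x y).+1 = cell 0 y.+1 by rewrite /cell x_last mulSn; lia.
  rewrite tile_at_cell //; case: (xi_border n_gt0 lt_y1m) => _ Bl' _ Bd' Bu'.
  rewrite -Bd' -Bu'; split; last by lia.
  by rewrite /H_compat (proj1 Br x_last) (proj1 Bl' erefl).
Qed.

Lemma SLen_snake : unique (SLen_prop snake) n.
Proof.
have [n_gt1 _] := grid_gt1.
have lt_n1 : n.-1 < n * m by nia.
split.
  split=> //; split=> [k _ /rpow_chain[] | e]; rewrite /= ?rpow_chain /cell; lia.
by move=> N [N_gt0 [_ /(_ (cell n.-1 0)) [_ /(_ erefl) /rpow_chain[]]]]; rewrite /= /cell; lia.
Qed.

Lemma SVerti_snake : SVerti white T snake n.
Proof.
move=> d t /rstar_snake lt_d [_ ->].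
have [x [y [lt_xn lt_ym ->]]] := cellP lt_d.
rewrite tile_at_cell // /up_border => not_up.
case: (xi_border lt_xn lt_ym) => _ Bl Br _ /proj1/contra_not/(_ not_up) y_ne_last.
have lt_y1m : y.+1 < m by lia.
case: (xi_border lt_xn lt_y1m) => T_xy1 Bl' Br' _ _.
exists (xi x y.+1); split=> //; split.
  move=> e /rpow_chain[-> _]; have -> : cell x y + n = cell x y.+1 by rewrite /cell mulSn; lia.
  exact: carries_cell.
split; first exact: xi_V.
by rewrite /left_border /right_border -Bl -Br -Bl' -Br'.
Qed.

Lemma snake_is_snake : is_snake white T snake.
Proof.
split; first exact: SPath_snake.
split; first exact: SNoLoop_snake.
split; first exact: SUniqTil_snake.
split; first exact: SSpecTil_snake.
split; first exact: SHori_snake.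
by exists n; split; [exact: SLen_snake | exact: SVerti_snake].
Qed.

End Grid.

Theorem lemma4p3 (Col : finType) (T : pred (tile Col)) (white : Col) :
  (forall t, T t -> nwhite white t <= 2) ->
  solvable white T ->
  exists I : interp Col, is_snake white T I.
Proof.
move=> two_white [n [m [n_gt0 [m_gt0 [xi [xi_border [xi_H xi_V]]]]]]].
by exists (snake n m xi); apply: snake_is_snake.
Qed.
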